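(* Let $V:\mathbb{R}\to\mathbb{R}$ be continuous and $T$-periodic and suppose that the monodromy of the Hill equation $\ddot u+V(t)u=0$ is elliptic. Then there exist real solutions $u_1,u_2$ with Wronskian $u_1\dot u_2-u_2\dot u_1=1$ such that $w(t)=\sqrt{u_1(t)^2+u_2(t)^2}$ is a positive $T$-periodic solution of the Ermakov–Pinney equation $\ddot w+V(t)w=w^{-3}$. Moreover, the rotation number $$\rho=\lim_{t\to\infty}\frac{\phi(t)-\phi(0)}{t}$$ of the flow on the torus $\dot\phi=(V(t)+1)+(V(t)-1)\cos\phi$ satisfies $$\rho=\lim_{t\to\infty}\frac{2}{t}\int_0^t\frac{ds}{u_1(s)^2+u_2(s)^2}=\frac{2\theta_H}{T},\qquad \theta_H:=\int_0^T\frac{dt}{w(t)^2}.$$ In particular, for $T=2\pi$, $\rho=\Delta/\pi$ where $\Delta=\int_0^{2\pi}\frac{dt}{u_1(t)^2+u_2(t)^2}$.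
   Context: The monodromy is the linear map $u(t)\mapsto u(t+T)$ on real solutions; it is elliptic if its trace has absolute value $<2$. The equation $\dot\phi=(V+1)+(V-1)\cos\phi$ is the equation satisfied by $\phi=2\arg(u-i\dot u)$ (continuous lift) for solutions $u$ of the Hill equation; $\phi(t)$ is any real-valued solution (the limit exists and is independent of the solution). The quantity $\theta_H$ is the non-adiabatic Hannay angle of the parametric oscillator $H=\tfrac12p^2+\tfrac12V(t)u^2$. *)

From Stdlib Require Import Reals.
From Coquelicot Require Import Coquelicot.
Open Scope R_scope.

Definition hill_sol (V u : R -> R) : Prop :=
  forall t, is_derive u t (Derive u t) /\
            is_derive (Derive u) t (- (V t * u t)).

(* The monodromy u(t) |-> u(t+T) of the Hill equation is elliptic:
   |trace| < 2.  Its trace is computed in the canonical basis of normalized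
   solutions y1 (y1(0)=1, y1'(0)=0), y2 (y2(0)=0, y2'(0)=1), in which the
   monodromy matrix is [[y1(T), y2(T)], [y1'(T), y2'(T)]]. *)
Definition monodromy_elliptic (V : R -> R) (T : R) : Prop :=
  exists y1 y2 : R -> R,
    hill_sol V y1 /\ hill_sol V y2 /\
    y1 0 = 1 /\ Derive y1 0 = 0 /\ y2 0 = 0 /\ Derive y2 0 = 1 /\
    Rabs (y1 T + Derive y2 T) < 2.

Definition ermakov_pinney_sol (V w : R -> R) : Prop :=
  forall t, is_derive w t (Derive w t) /\
            is_derive (Derive w) t (- (V t * w t) + / (w t ^ 3)).

Definition torus_flow_sol (V phi : R -> R) : Prop :=
  forall t, is_derive phi t ((V t + 1) + (V t - 1) * cos (phi t)).

(* An elliptic monodromy matrix preserves a positive definite quadratic form; writing it as a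
   sum of two squares yields solutions u1, u2 with Wronskian 1 and T-periodic u1^2 + u2^2, and
   Lagrange's identity turns w = sqrt (u1^2 + u2^2) into a solution of the Ermakov-Pinney equation.
   The argument F of (u1, u2) satisfies F' = 1 / w^2, so it grows linearly with slope theta_H / T.
   The argument of u1 - i u1' stays within PI of F, since the Wronskian forbids the two vectors to
   be antiparallel, and twice it solves the torus flow.  Solutions of the torus flow cannot cross,
   so any other one stays at bounded distance from it. *)

From Stdlib Require Import Reals Lra.
From Coquelicot Require Import Coquelicot.
Open Scope R_scope.

Lemma is_derive_continuous (f : R -> R) x l : is_derive f x l -> continuous f x.
Proof.
  intro Hf. apply (ex_derive_continuous (K := R_AbsRing) (V := R_NormedModule)).
  exists l; exact Hf.
Qed.

Lemma is_derive_continuity_pt (f : R -> R) x l : is_derive f x l -> continuity_pt f x.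
Proof. intro Hf. apply continuity_pt_filterlim, (is_derive_continuous f x l Hf). Qed.

Lemma is_derive_nonneg_le (f df : R -> R) a b : a <= b ->
  (forall x, a <= x <= b -> is_derive f x (df x)) ->
  (forall x, a <= x <= b -> 0 <= df x) -> f a <= f b.
Proof.
  intros Hab Hd Hpos.
  assert (Hin : forall x, Rmin a b <= x <= Rmax a b -> a <= x <= b)
    by (rewrite Rmin_left, Rmax_right by lra; auto).
  destruct (MVT_gen f a b df) as [c [Hc Hmvt]].
  - intros x Hx; apply Hd, Hin; lra.
  - intros x Hx; apply (is_derive_continuity_pt f x (df x)), Hd, Hin, Hx.
  - apply Hin in Hc. assert (0 <= df c) by (apply Hpos, Hc). nra.
Qed.

Lemma is_derive_zero_const (f : R -> R) :
  (forall x, is_derive f x 0) -> forall x y, f x = f y.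
Proof.
  intros Hd x y.
  destruct (MVT_gen f x y (fun _ => 0)) as [c [_ Hmvt]].
  - intros; apply Hd.
  - intros z _; apply (is_derive_continuity_pt f z 0), Hd.
  - lra.
Qed.

Lemma continuous_bounded_on (f : R -> R) a b : a <= b ->
  (forall t, continuous f t) -> exists K, forall x, a <= x <= b -> Rabs (f x) <= K.
Proof.
  intros Hab Hf.
  destruct (continuity_ab_maj (fun x => Rabs (f x)) a b Hab) as [M [HM _]].
  - intros x _. apply (continuity_pt_comp f Rabs).
    + apply continuity_pt_filterlim, Hf.
    + apply Rcontinuity_abs.
  - exists (Rabs (f M)); exact HM.
Qed.

(* Multiplying by [exp (- K x)] makes [g] nonincreasing. *)
Lemma gronwall_zero (g dg : R -> R) K a b : a <= b ->
  (forall x, a <= x <= b -> is_derive g x (dg x)) ->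
  (forall x, a <= x <= b -> Rabs (dg x) <= K * g x) ->
  (forall x, a <= x <= b -> 0 <= g x) ->
  g a = 0 -> g b = 0.
Proof.
  intros Hab Hd Hb Hpos Ha.
  set (h := fun x => - (g x * exp (- (K * x)))).
  assert (Hh : h a <= h b).
  { apply (is_derive_nonneg_le h (fun x => (K * g x - dg x) * exp (- (K * x)))); auto.
    - intros x Hx. unfold h. specialize (Hd x Hx). auto_derive.
      + exists (dg x); exact Hd.
      + rewrite (is_derive_unique (fun y : R => g y) _ _ Hd). ring.
    - intros x Hx. apply Rmult_le_pos; [|apply Rlt_le, exp_pos].
      assert (dg x <= Rabs (dg x)) by apply Rle_abs. specialize (Hb x Hx). lra. }
  unfold h in Hh. rewrite Ha in Hh.
  assert (Hgb := Hpos b (conj Hab (Rle_refl b))). assert (Hexp := exp_pos (- (K * b))).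
  nra.
Qed.

Lemma gronwall_zero_rev (g dg : R -> R) K a b : a <= b ->
  (forall x, a <= x <= b -> is_derive g x (dg x)) ->
  (forall x, a <= x <= b -> Rabs (dg x) <= K * g x) ->
  (forall x, a <= x <= b -> 0 <= g x) ->
  g b = 0 -> g a = 0.
Proof.
  intros Hab Hd Hb Hpos Hgb.
  assert (Href : g (- - a) = 0).
  { apply (gronwall_zero (fun x => g (- x)) (fun x => - dg (- x)) K (- b) (- a)); try lra.
    - intros x Hx. specialize (Hd (- x) ltac:(lra)). auto_derive.
      + exists (dg (- x)); exact Hd.
      + rewrite (is_derive_unique (fun y : R => g y) _ _ Hd). ring.
    - intros x Hx. rewrite Rabs_Ropp. apply Hb; lra.
    - intros x Hx. apply Hpos; lra.
    - rewrite Ropp_involutive; exact Hgb. }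
  rewrite Ropp_involutive in Href; exact Href.
Qed.

Lemma continuous_stays_below (g : R -> R) c : (forall t, continuous g t) ->
  g 0 < c -> (forall t, g t <> c) -> forall t, 0 <= t -> g t < c.
Proof.
  intros Hg H0 Hne t Ht.
  destruct (Rlt_le_dec (g t) c) as [|Hge]; [assumption|exfalso].
  destruct (Req_dec (g t) c) as [Heq|Hneq]; [exact (Hne t Heq)|].
  destruct (IVT (fun x => g x - c) 0 t) as [z [_ Hz]].
  - intro x. apply continuity_pt_minus.
    + apply continuity_pt_filterlim, Hg.
    + apply continuity_pt_const; intros ? ?; reflexivity.
  - destruct (Req_dec t 0) as [->|]; lra.
  - lra.
  - lra.
  - apply (Hne z); lra.
Qed.

Lemma is_lim_div_of_bounded (g : R -> R) L B :
  (forall t, 0 <= t -> Rabs (g t - L * t) <= B) -> is_lim (fun t => g t / t) p_infty L.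
Proof.
  intro Hg. apply is_lim_spec. intro eps. simpl.
  exists (Rabs B / eps). intros x Hx.
  assert (Heps := cond_pos eps).
  assert (HB : 0 <= Rabs B / eps) by (apply Rdiv_le_0_compat; [apply Rabs_pos|lra]).
  assert (Hx0 : 0 < x) by lra.
  assert (HBx : Rabs B < eps * x).
  { apply (Rmult_lt_compat_l eps) in Hx; [|lra].
    replace (eps * (Rabs B / eps)) with (Rabs B) in Hx by (field; lra). exact Hx. }
  replace (g x / x - L) with ((g x - L * x) / x) by (field; lra).
  unfold Rdiv. rewrite Rabs_mult, (Rabs_right (/ x)) by (left; apply Rinv_0_lt_compat, Hx0).
  apply (Rmult_lt_reg_r x); [exact Hx0|].
  rewrite Rmult_assoc, Rinv_l by lra.
  assert (B <= Rabs B) by apply Rle_abs. specialize (Hg x (Rlt_le _ _ Hx0)). lra.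
Qed.

Lemma gronwall_zero_everywhere (g dg k : R -> R) : (forall t, continuous k t) ->
  (forall t, is_derive g t (dg t)) -> (forall t, Rabs (dg t) <= Rabs (k t) * g t) ->
  (forall t, 0 <= g t) -> forall s, g s = 0 -> forall t, g t = 0.
Proof.
  intros Hk Hd Hb Hpos s Hs t.
  assert (Hcont : forall t, continuous (fun x => Rabs (k x)) t).
  { intro x. apply continuous_comp; [apply Hk|apply continuous_Rabs]. }
  assert (Hbound : forall a b, a <= b -> exists K,
             forall x, a <= x <= b -> Rabs (dg x) <= K * g x).
  { intros a b Hab. destruct (continuous_bounded_on _ a b Hab Hcont) as [K HK].
    exists K. intros x Hx. eapply Rle_trans; [apply Hb|].
    apply Rmult_le_compat_r; [apply Hpos|].
    rewrite <- (Rabs_Rabsolu (k x)). apply HK, Hx. }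
  destruct (Rle_dec s t) as [Hst|Hts].
  - destruct (Hbound s t Hst) as [K HK].
    exact (gronwall_zero g dg K s t Hst (fun x _ => Hd x) HK (fun x _ => Hpos x) Hs).
  - destruct (Hbound t s ltac:(lra)) as [K HK].
    exact (gronwall_zero_rev g dg K t s ltac:(lra) (fun x _ => Hd x) HK (fun x _ => Hpos x) Hs).
Qed.

Lemma Rabs_2xy_le x y : Rabs (2 * x * y) <= x ^ 2 + y ^ 2.
Proof.
  rewrite !Rabs_mult, (Rabs_right 2) by lra.
  rewrite <- (pow2_abs x), <- (pow2_abs y).
  assert (0 <= (Rabs x - Rabs y) ^ 2) by apply pow2_ge_0. nra.
Qed.

Lemma Rabs_cos_sub_le a b : Rabs (cos a - cos b) <= Rabs (a - b).
Proof.
  destruct (MVT_gen cos b a (fun x => - sin x)) as [c [_ Hmvt]].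
  - intros; apply is_derive_cos.
  - intros; apply continuity_cos.
  - rewrite Hmvt, Rabs_mult, Rabs_Ropp.
    assert (Rabs (sin c) <= 1) by (apply Rabs_le, SIN_bound).
    assert (0 <= Rabs (a - b)) by apply Rabs_pos. nra.
Qed.

Section LipschitzODE.

Variables (G : R -> R -> R) (L : R -> R).
Hypothesis L_continuous : forall t, continuous L t.
Hypothesis G_lipschitz : forall t p q, Rabs (G t p - G t q) <= L t * Rabs (p - q).

Lemma lipschitz_ode_unique (x y : R -> R) :
  (forall t, is_derive x t (G t (x t))) -> (forall t, is_derive y t (G t (y t))) ->
  forall s, x s = y s -> forall t, x t = y t.
Proof.
  intros Hx Hy s Hs t.
  assert (Hsq : (x t - y t) ^ 2 = 0).
  { apply (gronwall_zero_everywhere (fun t => (x t - y t) ^ 2)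
             (fun t => 2 * (x t - y t) * (G t (x t) - G t (y t))) (fun t => 2 * L t)) with (s := s).
    - intro r. apply (continuous_scal_r 2 L r), L_continuous.
    - intro r. auto_derive.
      + split; [exists (G r (x r)); apply Hx|split; [exists (G r (y r)); apply Hy|exact I]].
      + rewrite (is_derive_unique (fun u : R => x u) _ _ (Hx r)),
                (is_derive_unique (fun u : R => y u) _ _ (Hy r)). ring.
    - intro r. rewrite !Rabs_mult, (Rabs_right 2) by lra.
      rewrite <- (pow2_abs (x r - y r)).
      assert (HG := G_lipschitz r (x r) (y r)).
      assert (0 <= Rabs (x r - y r)) by apply Rabs_pos.
      assert (L r <= Rabs (L r)) by apply Rle_abs.
      assert (0 <= Rabs (G r (x r) - G r (y r))) by apply Rabs_pos.
      assert (Rabs (G r (x r) - G r (y r)) <= Rabs (L r) * Rabs (x r - y r)) by nra.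
      nra.
    - intro r. apply pow2_ge_0.
    - rewrite Hs. ring. }
  apply Rminus_diag_uniq. nra.
Qed.

Lemma lipschitz_ode_sol_lt (x y : R -> R) :
  (forall t, is_derive x t (G t (x t))) -> (forall t, is_derive y t (G t (y t))) ->
  x 0 < y 0 -> forall t, 0 <= t -> x t < y t.
Proof.
  intros Hx Hy H0 t Ht.
  assert (Hlt := continuous_stays_below (fun t => x t - y t) 0).
  enough (x t - y t < 0) by lra.
  apply Hlt; [|lra| |exact Ht].
  - intro r. apply (continuous_minus x y r);
      [apply (is_derive_continuous _ _ _ (Hx r))|apply (is_derive_continuous _ _ _ (Hy r))].
  - intros s Hs. assert (Heq := lipschitz_ode_unique x y Hx Hy s ltac:(lra) 0). lra.
Qed.

End LipschitzODE.

Lemma hill_sol_lincomb V u v a b : hill_sol V u -> hill_sol V v ->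
  (forall t, Derive (fun t => a * u t + b * v t) t = a * Derive u t + b * Derive v t) /\
  hill_sol V (fun t => a * u t + b * v t).
Proof.
  intros Hu Hv.
  assert (Hd : forall t, is_derive (fun t => a * u t + b * v t) t (a * Derive u t + b * Derive v t)).
  { intro t. apply (is_derive_plus (fun t => a * u t) (fun t => b * v t)).
    - apply (is_derive_scal u), Hu.
    - apply (is_derive_scal v), Hv. }
  assert (HD : forall t, Derive (fun t => a * u t + b * v t) t = a * Derive u t + b * Derive v t)
    by (intro t; apply is_derive_unique, Hd).
  split; [exact HD|]. intro t. split.
  - rewrite HD. apply Hd.
  - apply (is_derive_ext (fun t => a * Derive u t + b * Derive v t)); [intro; symmetry; apply HD|].
    replace (- (V t * (a * u t + b * v t))) with (a * - (V t * u t) + b * - (V t * v t)) by ring.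
    apply (is_derive_plus (fun t => a * Derive u t) (fun t => b * Derive v t)).
    + apply (is_derive_scal (Derive u)), Hu.
    + apply (is_derive_scal (Derive v)), Hv.
Qed.

Lemma is_derive_shift (f df : R -> R) T : (forall t, is_derive f t (df t)) ->
  forall t, is_derive (fun t => f (t + T)) t (df (t + T)).
Proof.
  intros Hf t. specialize (Hf (t + T)). auto_derive.
  - exists (df (t + T)); exact Hf.
  - rewrite (is_derive_unique (fun y : R => f y) _ _ Hf). ring.
Qed.

Lemma hill_sol_shift V u T : (forall t, V (t + T) = V t) -> hill_sol V u ->
  (forall t, Derive (fun t => u (t + T)) t = Derive u (t + T)) /\ hill_sol V (fun t => u (t + T)).
Proof.
  intros HV Hu.
  assert (HD : forall t, Derive (fun t => u (t + T)) t = Derive u (t + T)).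
  { intro t. apply is_derive_unique, (is_derive_shift u (Derive u)). intro; apply Hu. }
  split; [exact HD|]. intro t. split.
  - rewrite HD. apply (is_derive_shift u (Derive u)). intro; apply Hu.
  - apply (is_derive_ext (fun t => Derive u (t + T))); [intro; symmetry; apply HD|].
    rewrite <- HV. apply (is_derive_shift (Derive u) (fun t => - (V t * u t))). intro; apply Hu.
Qed.

Lemma hill_sol_zero V e : (forall t, continuous V t) -> hill_sol V e ->
  e 0 = 0 -> Derive e 0 = 0 -> forall t, e t = 0.
Proof.
  intros HV He H0 H0' t.
  assert (Henergy : e t ^ 2 + Derive e t ^ 2 = 0).
  { apply (gronwall_zero_everywhere (fun t => e t ^ 2 + Derive e t ^ 2)
             (fun t => 2 * e t * Derive e t * (1 - V t)) (fun t => 1 - V t)) with (s := 0).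
    - intro r. apply (continuous_minus (fun _ => 1) V r); [apply continuous_const|apply HV].
    - intro r. destruct (He r) as [Hd Hdd]. auto_derive.
      + split; [exists (Derive e r); exact Hd|split; [exists (- (V r * e r)); exact Hdd|exact I]].
      + rewrite (is_derive_unique (fun y : R => e y) _ _ Hd),
                (is_derive_unique (fun y : R => Derive e y) _ _ Hdd). ring.
    - intro r. rewrite (Rabs_mult _ (1 - V r)), Rmult_comm.
      apply Rmult_le_compat_l; [apply Rabs_pos|apply Rabs_2xy_le].
    - intro r. nra.
    - rewrite H0, H0'. ring. }
  nra.
Qed.

Lemma hill_wronskian_const V u v : hill_sol V u -> hill_sol V v ->
  forall t, u t * Derive v t - v t * Derive u t = u 0 * Derive v 0 - v 0 * Derive u 0.
Proof.
  intros Hu Hv t.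
  apply (is_derive_zero_const (fun t => u t * Derive v t - v t * Derive u t)).
  intro x. destruct (Hu x) as [Hu1 Hu2]; destruct (Hv x) as [Hv1 Hv2]. auto_derive.
  - repeat split; eexists; eassumption.
  - rewrite (is_derive_unique (fun y : R => u y) _ _ Hu1),
            (is_derive_unique (fun y : R => Derive u y) _ _ Hu2),
            (is_derive_unique (fun y : R => v y) _ _ Hv1),
            (is_derive_unique (fun y : R => Derive v y) _ _ Hv2). ring.
Qed.

Lemma hill_sol_expand V y1 y2 u : (forall t, continuous V t) ->
  hill_sol V y1 -> hill_sol V y2 -> hill_sol V u ->
  y1 0 = 1 -> Derive y1 0 = 0 -> y2 0 = 0 -> Derive y2 0 = 1 ->
  forall t, u t = u 0 * y1 t + Derive u 0 * y2 t.
Proof.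
  intros HV Hy1 Hy2 Hu Hy10 Hdy10 Hy20 Hdy20 t.
  destruct (hill_sol_lincomb V y1 y2 (u 0) (Derive u 0) Hy1 Hy2) as [HDc Hc].
  destruct (hill_sol_lincomb V u _ 1 (-1) Hu Hc) as [HDe He].
  assert (Hzero := hill_sol_zero V _ HV He). simpl in Hzero.
  rewrite HDe, HDc, Hy10, Hdy10, Hy20, Hdy20 in Hzero.
  specialize (Hzero ltac:(ring) ltac:(ring) t). lra.
Qed.

Lemma sum_sq_pos_of_cross x y a b : x * a - y * b = 1 -> 0 < x ^ 2 + y ^ 2.
Proof.
  intro H. destruct (Req_dec x 0) as [->|Hx].
  - destruct (Req_dec y 0) as [->|Hy]; [lra|].
    assert (0 < y ^ 2) by (apply pow2_gt_0, Hy). nra.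
  - assert (0 < x ^ 2) by (apply pow2_gt_0, Hx). nra.
Qed.

Lemma is_derive_norm (x y : R -> R) t dx dy : is_derive x t dx -> is_derive y t dy ->
  0 < x t ^ 2 + y t ^ 2 ->
  is_derive (fun t => sqrt (x t ^ 2 + y t ^ 2)) t ((x t * dx + y t * dy) / sqrt (x t ^ 2 + y t ^ 2)).
Proof.
  intros Hx Hy HS. auto_derive.
  - repeat split; [exists dx; exact Hx|exists dy; exact Hy|exact HS].
  - rewrite (is_derive_unique (fun u : R => x u) _ _ Hx), (is_derive_unique (fun u : R => y u) _ _ Hy).
    replace (x t * (x t * 1) + y t * (y t * 1)) with (x t ^ 2 + y t ^ 2) by ring.
    assert (0 < sqrt (x t ^ 2 + y t ^ 2)) by (apply sqrt_lt_R0, HS). field. lra.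
Qed.

(* The relation [S * D - N ^ 2 = 1] is Lagrange's identity for a pair with Wronskian 1. *)
Lemma ermakov_pinney_identity w S D N v : 0 < w -> w ^ 2 = S -> S * D - N ^ 2 = 1 ->
  ((D - v * S) * w - N * (N / w)) / w ^ 2 = - (v * w) + / w ^ 3.
Proof.
  intros Hw HS Hlag. subst S.
  replace D with ((1 + N ^ 2) / w ^ 2) by (field_simplify; [|lra]; rewrite <- Hlag; field; lra).
  field. lra.
Qed.

Lemma ermakov_pinney_of_pair V u1 u2 : hill_sol V u1 -> hill_sol V u2 ->
  (forall t, u1 t * Derive u2 t - u2 t * Derive u1 t = 1) ->
  ermakov_pinney_sol V (fun t => sqrt (u1 t ^ 2 + u2 t ^ 2)).
Proof.
  intros Hu1 Hu2 W.
  set (w := fun t => sqrt (u1 t ^ 2 + u2 t ^ 2)).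
  assert (HS : forall t, 0 < u1 t ^ 2 + u2 t ^ 2) by (intro t; exact (sum_sq_pos_of_cross _ _ _ _ (W t))).
  assert (Hw : forall t, 0 < w t) by (intro t; apply sqrt_lt_R0, HS).
  assert (Hw2 : forall t, w t ^ 2 = u1 t ^ 2 + u2 t ^ 2) by (intro t; apply pow2_sqrt, Rlt_le, HS).
  assert (Hdw : forall t, is_derive w t ((u1 t * Derive u1 t + u2 t * Derive u2 t) / w t))
    by (intro t; apply is_derive_norm; [apply Hu1|apply Hu2|apply HS]).
  intro t. split.
  - rewrite (is_derive_unique _ _ _ (Hdw t)). apply Hdw.
  - apply (is_derive_ext (fun t => (u1 t * Derive u1 t + u2 t * Derive u2 t) / w t));
      [intro; symmetry; apply is_derive_unique, Hdw|].
    destruct (Hu1 t) as [Hd1 Hdd1]; destruct (Hu2 t) as [Hd2 Hdd2].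
    assert (Hnum : is_derive (fun t => u1 t * Derive u1 t + u2 t * Derive u2 t) t
      (Derive u1 t ^ 2 + Derive u2 t ^ 2 - V t * (u1 t ^ 2 + u2 t ^ 2))).
    { auto_derive.
      - repeat split; eexists; eassumption.
      - rewrite (is_derive_unique (fun y : R => u1 y) _ _ Hd1),
                (is_derive_unique (fun y : R => Derive u1 y) _ _ Hdd1),
                (is_derive_unique (fun y : R => u2 y) _ _ Hd2),
                (is_derive_unique (fun y : R => Derive u2 y) _ _ Hdd2). ring. }
    assert (Hquot := is_derive_div _ _ t _ _ Hnum (Hdw t) (Rgt_not_eq _ _ (Hw t))).
    rewrite ermakov_pinney_identity in Hquot; [exact Hquot|apply Hw|apply Hw2|].
    rewrite <- (pow1 2), <- (W t). ring.
Qed.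

(* The positive definite form preserved by an elliptic matrix, as a sum of two squares. *)
Lemma elliptic_invariant_form a b c d : a * d - b * c = 1 -> Rabs (a + d) < 2 ->
  exists p q k, 0 < p /\ p * k = 1 /\ forall Y1 Y2,
    (p * (a * Y1 + c * Y2) + q * (b * Y1 + d * Y2)) ^ 2 + (k * (b * Y1 + d * Y2)) ^ 2
    = (p * Y1 + q * Y2) ^ 2 + (k * Y2) ^ 2.
Proof.
  intros Hdet Htr. apply Rabs_def2 in Htr.
  assert (Hb : b <> 0).
  { intro Hb0. rewrite Hb0 in Hdet. assert (0 <= (a - d) ^ 2) by apply pow2_ge_0. nra. }
  assert (Hs : exists s, s ^ 2 = 1 - ((a + d) / 2) ^ 2 /\ 0 < - s / b).
  { set (r := sqrt (1 - ((a + d) / 2) ^ 2)).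
    assert (Hr : 0 < r) by (apply sqrt_lt_R0; nra).
    assert (Hr2 : r ^ 2 = 1 - ((a + d) / 2) ^ 2) by (apply pow2_sqrt; nra).
    destruct (Rlt_dec 0 b) as [Hbpos|Hbneg].
    - exists (- r). split; [rewrite <- Hr2; ring|].
      unfold Rdiv. rewrite Ropp_involutive.
      apply Rmult_lt_0_compat; [exact Hr|apply Rinv_0_lt_compat, Hbpos].
    - exists r. split; [exact Hr2|].
      replace (- r / b) with (r * / - b) by (field; exact Hb).
      apply Rmult_lt_0_compat; [exact Hr|apply Rinv_0_lt_compat; lra]. }
  destruct Hs as [s [Hs2 Hsb]].
  assert (Hs0 : s <> 0) by (intro Hs0; rewrite Hs0 in Hsb; unfold Rdiv in Hsb; lra).
  set (k := sqrt (- s / b)).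
  assert (Hk2 : k ^ 2 = - s / b) by (apply pow2_sqrt; lra).
  assert (Hk : 0 < k) by (apply sqrt_lt_R0, Hsb).
  exists (- k * b / s), (k * (a - d) / (2 * s)), k.
  assert (Hpk : - k * b / s * k = 1)
    by (replace (- k * b / s * k) with (- (k ^ 2) * b / s) by (field; lra);
        rewrite Hk2; field; lra).
  split; [apply (Rmult_lt_reg_r k); [exact Hk|rewrite Rmult_0_l, Hpk; lra]|split; [exact Hpk|]].
  intros Y1 Y2.
  replace c with ((a * d - 1) / b) by (rewrite <- Hdet; field; exact Hb).
  apply Rminus_diag_uniq.
  (* The defect is proportional to [((a + d) / 2) ^ 2 + s ^ 2 - 1], which vanishes. *)
  replace (_ - _) with ((k ^ 2 / s ^ 2) * (((a + d) / 2) ^ 2 + s ^ 2 - 1)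
                        * (b ^ 2 * Y1 ^ 2 + 2 * b * d * Y1 * Y2 + (d ^ 2 - 1) * Y2 ^ 2))
    by (field; auto).
  rewrite Hs2. ring.
Qed.

Lemma hill_elliptic_pair V T : (forall t, continuous V t) ->
  (forall t, V (t + T) = V t) -> monodromy_elliptic V T ->
  exists u1 u2, hill_sol V u1 /\ hill_sol V u2 /\
    (forall t, u1 t * Derive u2 t - u2 t * Derive u1 t = 1) /\ 0 < u1 0 /\ u2 0 = 0 /\
    (forall t, u1 (t + T) ^ 2 + u2 (t + T) ^ 2 = u1 t ^ 2 + u2 t ^ 2).
Proof.
  intros HV HP (y1 & y2 & Hy1 & Hy2 & Hy10 & Hdy10 & Hy20 & Hdy20 & Htr).
  assert (W0 : forall t, y1 t * Derive y2 t - y2 t * Derive y1 t = 1).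
  { intro t. rewrite (hill_wronskian_const V y1 y2 Hy1 Hy2 t), Hy10, Hdy10, Hy20, Hdy20. ring. }
  assert (Hmono : forall y, hill_sol V y -> forall t, y (t + T) = y T * y1 t + Derive y T * y2 t).
  { intros y Hy t. destruct (hill_sol_shift V y T HP Hy) as [HD Hs].
    rewrite (hill_sol_expand V y1 y2 _ HV Hy1 Hy2 Hs Hy10 Hdy10 Hy20 Hdy20 t), HD, Rplus_0_l.
    reflexivity. }
  destruct (elliptic_invariant_form (y1 T) (y2 T) (Derive y1 T) (Derive y2 T))
    as (p & q & k & Hp & Hpk & Hform); [rewrite <- (W0 T); ring|exact Htr|].
  destruct (hill_sol_lincomb V y1 y2 p q Hy1 Hy2) as [HD1 Hu1].
  destruct (hill_sol_lincomb V y1 y2 0 k Hy1 Hy2) as [HD2 Hu2].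
  exists (fun t => p * y1 t + q * y2 t), (fun t => 0 * y1 t + k * y2 t).
  split; [exact Hu1|split; [exact Hu2|split; [|split; [|split]]]].
  - intro t. rewrite HD1, HD2.
    transitivity (p * k * (y1 t * Derive y2 t - y2 t * Derive y1 t)); [ring|].
    rewrite W0, Hpk. ring.
  - rewrite Hy10, Hy20. lra.
  - rewrite Hy20. ring.
  - intro t. rewrite (Hmono y1 Hy1 t), (Hmono y2 Hy2 t), !Rmult_0_l, !Rplus_0_l. apply Hform.
Qed.

Lemma quasiperiodic_linear_bound (F : R -> R) T th : 0 < T -> F 0 = 0 ->
  (forall t, F (t + T) = F t + th) -> (forall t, 0 <= t <= T -> 0 <= F t <= th) ->
  forall t, 0 <= t -> Rabs (F t - th / T * t) <= th.
Proof.
  intros HT H0 HP HB.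
  assert (Hn : forall n : nat, forall t, 0 <= t <= INR n * T -> Rabs (F t - th / T * t) <= th).
  { induction n as [|n IH]; intros t Ht.
    - simpl in Ht. replace t with 0 by lra. rewrite H0, Rmult_0_r, Rminus_0_r, Rabs_R0.
      assert (HB0 := HB 0). lra.
    - rewrite S_INR in Ht. destruct (Rle_dec t T) as [Hle|Hgt].
      + specialize (HB t (conj (proj1 Ht) Hle)).
        assert (0 <= th / T * t <= th).
        { split; [apply Rmult_le_pos; [apply Rdiv_le_0_compat|]; lra|].
          replace th with (th / T * T) at 2 by (field; lra).
          apply Rmult_le_compat_l; [apply Rdiv_le_0_compat|]; lra. }
        apply Rabs_le. lra.
      + replace (F t - th / T * t) with (F (t - T) - th / T * (t - T)); [apply IH; lra|].
        assert (E := HP (t - T)). replace (t - T + T) with t in E by ring.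
        rewrite E. field. lra. }
  intros t Ht. destruct (INR_archimed T t HT) as [n Hn']. apply (Hn n). lra.
Qed.

Lemma RInt_periodic_linear_bound (f : R -> R) T : 0 < T -> (forall t, continuous f t) ->
  (forall t, 0 <= f t) -> (forall t, f (t + T) = f t) ->
  forall t, 0 <= t -> Rabs (RInt f 0 t - RInt f 0 T / T * t) <= RInt f 0 T.
Proof.
  intros HT Hf Hpos HP.
  assert (Hex : forall a b, ex_RInt f a b)
    by (intros a b; apply (ex_RInt_continuous (V := R_CompleteNormedModule)); intros; apply Hf).
  assert (Hsplit : forall a b, RInt f 0 b = RInt f 0 a + RInt f a b)
    by (intros a b; symmetry; apply (RInt_Chasles (V := R_CompleteNormedModule)); apply Hex).
  apply quasiperiodic_linear_bound; [exact HT|exact (RInt_point (V := R_CompleteNormedModule) 0 f)| |].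
  - intro t. rewrite (Hsplit T (t + T)), Rplus_comm. f_equal.
    replace T with (1 * 0 + T) at 1 by ring. replace (t + T) with (1 * t + T) by ring.
    rewrite <- (RInt_comp_lin (V := R_CompleteNormedModule)) by apply Hex.
    apply RInt_ext. intros x _. rewrite !Rmult_1_l, HP. reflexivity.
  - intros t Ht. rewrite (Hsplit t T).
    assert (0 <= RInt f 0 t) by (apply RInt_ge_0; [lra|apply Hex|intros; apply Hpos]).
    assert (0 <= RInt f t T) by (apply RInt_ge_0; [lra|apply Hex|intros; apply Hpos]).
    lra.
Qed.

Lemma div_norm_const (N dN x y dx dy : R -> R) :
  (forall t, is_derive N t (dN t)) ->
  (forall t, is_derive x t (dx t)) -> (forall t, is_derive y t (dy t)) ->
  (forall t, 0 < x t ^ 2 + y t ^ 2) ->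
  (forall t, dN t * (x t ^ 2 + y t ^ 2) = N t * (x t * dx t + y t * dy t)) ->
  forall t, N t / sqrt (x t ^ 2 + y t ^ 2) = N 0 / sqrt (x 0 ^ 2 + y 0 ^ 2).
Proof.
  intros HN Hx Hy HS Hrel t.
  apply (is_derive_zero_const (fun t => N t / sqrt (x t ^ 2 + y t ^ 2))). intro s.
  assert (Hr : 0 < sqrt (x s ^ 2 + y s ^ 2)) by (apply sqrt_lt_R0, HS).
  assert (Hr2 : sqrt (x s ^ 2 + y s ^ 2) ^ 2 = x s ^ 2 + y s ^ 2) by (apply pow2_sqrt, Rlt_le, HS).
  assert (Hquot := is_derive_div N _ s _ _ (HN s) (is_derive_norm x y s _ _ (Hx s) (Hy s) (HS s))
                     (Rgt_not_eq _ _ Hr)).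
  replace 0 with ((dN s * sqrt (x s ^ 2 + y s ^ 2) ^ 2 - N s * (x s * dx s + y s * dy s))
                  / sqrt (x s ^ 2 + y s ^ 2) ^ 3)
    by (rewrite Hr2, Hrel; field; lra).
  replace (_ / sqrt (x s ^ 2 + y s ^ 2) ^ 3) with
    ((dN s * sqrt (x s ^ 2 + y s ^ 2) - N s * ((x s * dx s + y s * dy s) / sqrt (x s ^ 2 + y s ^ 2)))
     / sqrt (x s ^ 2 + y s ^ 2) ^ 2) by (field; lra).
  exact Hquot.
Qed.

Section PolarLift.

Variables (x y dx dy th : R -> R).
Hypothesis x_deriv : forall t, is_derive x t (dx t).
Hypothesis y_deriv : forall t, is_derive y t (dy t).
Hypothesis norm2_pos : forall t, 0 < x t ^ 2 + y t ^ 2.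
Hypothesis th_deriv :
  forall t, is_derive th t ((x t * dy t - y t * dx t) / (x t ^ 2 + y t ^ 2)).

(* The coordinates of [(x, y)] in the frame rotated by [th]. *)
Let A t := x t * cos (th t) + y t * sin (th t).
Let B t := y t * cos (th t) - x t * sin (th t).

Lemma rotated_coords_const t :
  A t / sqrt (x t ^ 2 + y t ^ 2) = A 0 / sqrt (x 0 ^ 2 + y 0 ^ 2) /\
  B t / sqrt (x t ^ 2 + y t ^ 2) = B 0 / sqrt (x 0 ^ 2 + y 0 ^ 2).
Proof.
  set (w := fun t => (x t * dy t - y t * dx t) / (x t ^ 2 + y t ^ 2)).
  split.
  - apply (div_norm_const A (fun t => dx t * cos (th t) + dy t * sin (th t) + w t * B t) x y dx dy);
      [|exact x_deriv|exact y_deriv|exact norm2_pos|].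
    + intro s. unfold A. auto_derive.
      * repeat split; eexists; [apply x_deriv|apply th_deriv|apply y_deriv|apply th_deriv].
      * rewrite (is_derive_unique (fun u : R => x u) _ _ (x_deriv s)),
                (is_derive_unique (fun u : R => y u) _ _ (y_deriv s)),
                (is_derive_unique (fun u : R => th u) _ _ (th_deriv s)).
        unfold w, B. ring.
    + intro s. unfold w, A, B. field. apply Rgt_not_eq, norm2_pos.
  - apply (div_norm_const B (fun t => dy t * cos (th t) - dx t * sin (th t) - w t * A t) x y dx dy);
      [|exact x_deriv|exact y_deriv|exact norm2_pos|].
    + intro s. unfold B. auto_derive.
      * repeat split; eexists; [apply y_deriv|apply th_deriv|apply x_deriv|apply th_deriv].
      * rewrite (is_derive_unique (fun u : R => x u) _ _ (x_deriv s)),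
                (is_derive_unique (fun u : R => y u) _ _ (y_deriv s)),
                (is_derive_unique (fun u : R => th u) _ _ (th_deriv s)).
        unfold w, A. ring.
    + intro s. unfold w, A, B. field. apply Rgt_not_eq, norm2_pos.
Qed.

Lemma polar_lift :
  x 0 * sin (th 0) = y 0 * cos (th 0) -> 0 < x 0 * cos (th 0) + y 0 * sin (th 0) ->
  forall t, x t = sqrt (x t ^ 2 + y t ^ 2) * cos (th t) /\
            y t = sqrt (x t ^ 2 + y t ^ 2) * sin (th t).
Proof.
  intros Hsin0 Hcos0 t.
  assert (Hrot : forall t, A t ^ 2 + B t ^ 2 = x t ^ 2 + y t ^ 2).
  { intro s. unfold A, B. rewrite <- (Rmult_1_r (x s ^ 2 + y s ^ 2)), <- (sin2_cos2 (th s)).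
    unfold Rsqr. ring. }
  assert (HB0 : B 0 = 0) by (unfold B; lra).
  assert (HA0 : A 0 = sqrt (x 0 ^ 2 + y 0 ^ 2)).
  { rewrite <- Hrot, HB0. replace (A 0 ^ 2 + 0 ^ 2) with (A 0 ^ 2) by ring.
    rewrite sqrt_pow2; [reflexivity|unfold A; lra]. }
  assert (Hr0 : 0 < sqrt (x 0 ^ 2 + y 0 ^ 2)) by (apply sqrt_lt_R0, norm2_pos).
  assert (Hr : 0 < sqrt (x t ^ 2 + y t ^ 2)) by (apply sqrt_lt_R0, norm2_pos).
  destruct (rotated_coords_const t) as [HA HB].
  rewrite HA0, Rdiv_diag in HA by lra. rewrite HB0, Rdiv_0_l in HB.
  assert (HAt : A t = sqrt (x t ^ 2 + y t ^ 2)).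
  { apply (Rmult_eq_reg_r (/ sqrt (x t ^ 2 + y t ^ 2))); [|apply Rinv_neq_0_compat; lra].
    fold (Rdiv (A t) (sqrt (x t ^ 2 + y t ^ 2))). rewrite HA. field. lra. }
  assert (HBt : B t = 0).
  { apply (Rmult_eq_reg_r (/ sqrt (x t ^ 2 + y t ^ 2))); [|apply Rinv_neq_0_compat; lra].
    fold (Rdiv (B t) (sqrt (x t ^ 2 + y t ^ 2))). rewrite HB. ring. }
  rewrite <- HAt. unfold A. unfold B in HBt.
  assert (Htrig := sin2_cos2 (th t)). unfold Rsqr in Htrig.
  split.
  - replace (x t) with (x t * (sin (th t) * sin (th t) + cos (th t) * cos (th t))
                        + sin (th t) * (y t * cos (th t) - x t * sin (th t))) at 1
      by (rewrite Htrig, HBt; ring).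
    ring.
  - replace (y t) with (y t * (sin (th t) * sin (th t) + cos (th t) * cos (th t))
                        - cos (th t) * (y t * cos (th t) - x t * sin (th t))) at 1
      by (rewrite Htrig, HBt; ring).
    ring.
Qed.

End PolarLift.

Lemma torus_flow_sol_shift V chi (n : nat) : torus_flow_sol V chi ->
  torus_flow_sol V (fun t => chi t + 2 * INR n * PI).
Proof.
  intros Hchi t. rewrite cos_period.
  rewrite <- (Rplus_0_r (_ + _ * cos (chi t))).
  apply (is_derive_plus chi (fun _ => 2 * INR n * PI)); [apply Hchi|auto_derive; auto].
Qed.

Lemma torus_flow_sol_lt V phi zeta : (forall t, continuous V t) ->
  torus_flow_sol V phi -> torus_flow_sol V zeta ->
  phi 0 < zeta 0 -> forall t, 0 <= t -> phi t < zeta t.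
Proof.
  intros HV.
  apply (lipschitz_ode_sol_lt (fun t p => (V t + 1) + (V t - 1) * cos p) (fun t => Rabs (V t - 1))).
  - intro t. apply (continuous_comp (fun t => V t - 1) Rabs); [|apply continuous_Rabs].
    apply (continuous_minus V (fun _ => 1)); [apply HV|apply continuous_const].
  - intros t p q.
    replace (V t + 1 + (V t - 1) * cos p - (V t + 1 + (V t - 1) * cos q))
      with ((V t - 1) * (cos p - cos q)) by ring.
    rewrite Rabs_mult. apply Rmult_le_compat_l; [apply Rabs_pos|apply Rabs_cos_sub_le].
Qed.

Lemma torus_flow_sol_close V phi chi : (forall t, continuous V t) ->
  torus_flow_sol V phi -> torus_flow_sol V chi ->
  exists B, forall t, 0 <= t -> Rabs (phi t - chi t) <= B.
Proof.
  intros HV Hphi Hchi.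
  assert (H2PI : 0 < 2 * PI) by (assert (HPI := PI_RGT_0); lra).
  destruct (INR_archimed (2 * PI) (Rabs (phi 0 - chi 0)) H2PI) as [n Hn].
  exists (2 * INR n * PI). intros t Ht. apply Rabs_le. split.
  - assert (Hlt := torus_flow_sol_lt V chi _ HV Hchi (torus_flow_sol_shift V phi n Hphi)).
    assert (- (phi 0 - chi 0) <= Rabs (phi 0 - chi 0)) by apply Rabs_maj2.
    specialize (Hlt ltac:(lra) t Ht). lra.
  - assert (Hlt := torus_flow_sol_lt V phi _ HV Hphi (torus_flow_sol_shift V chi n Hchi)).
    assert (phi 0 - chi 0 <= Rabs (phi 0 - chi 0)) by apply Rle_abs.
    specialize (Hlt ltac:(lra) t Ht). lra.
Qed.

(* Here [th] is a continuous determination of [arg (u - i u')]. *)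
Lemma torus_flow_sol_of_hill V u th : hill_sol V u ->
  (forall t, 0 < u t ^ 2 + (- Derive u t) ^ 2) ->
  (forall t, u t = sqrt (u t ^ 2 + (- Derive u t) ^ 2) * cos (th t) /\
             - Derive u t = sqrt (u t ^ 2 + (- Derive u t) ^ 2) * sin (th t)) ->
  (forall t, is_derive th t
     ((u t * (V t * u t) - (- Derive u t) * Derive u t) / (u t ^ 2 + (- Derive u t) ^ 2))) ->
  torus_flow_sol V (fun t => 2 * th t).
Proof.
  intros Hu HQ Hpolar Hth t.
  set (r := sqrt (u t ^ 2 + (- Derive u t) ^ 2)).
  assert (Hr : 0 < r) by (apply sqrt_lt_R0, HQ).
  destruct (Hpolar t) as [Hc Hs]. fold r in Hc, Hs.
  assert (Htrig := sin2_cos2 (th t)). unfold Rsqr in Htrig.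
  replace ((V t + 1) + (V t - 1) * cos (2 * th t)) with
    (2 * ((u t * (V t * u t) - (- Derive u t) * Derive u t) / (u t ^ 2 + (- Derive u t) ^ 2))).
  - apply (is_derive_scal th), Hth.
  - rewrite cos_2a.
    replace (u t * (V t * u t) - - Derive u t * Derive u t)
      with (V t * u t ^ 2 + (- Derive u t) ^ 2) by ring.
    rewrite Hs, Hc.
    replace ((r * cos (th t)) ^ 2 + (r * sin (th t)) ^ 2) with (r ^ 2)
      by (rewrite <- (Rmult_1_r (r ^ 2)), <- Htrig; ring).
    transitivity (2 * (V t * cos (th t) ^ 2 + sin (th t) ^ 2)); [field; lra|].
    replace (V t + 1) with ((V t + 1) * (sin (th t) * sin (th t) + cos (th t) * cos (th t)))
      by (rewrite Htrig; ring).
    ring.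
Qed.

Lemma atan_angle_init x y : 0 < x ->
  x * sin (atan (y / x)) = y * cos (atan (y / x)) /\
  0 < x * cos (atan (y / x)) + y * sin (atan (y / x)).
Proof.
  intro Hx. rewrite sin_atan, cos_atan.
  assert (Hq : 0 < sqrt (1 + (y / x)²)) by (apply sqrt_lt_R0; unfold Rsqr; nra).
  split; [field; lra|].
  replace (x * (1 / sqrt (1 + (y / x)²)) + y * (y / x / sqrt (1 + (y / x)²)))
    with ((x ^ 2 + y ^ 2) / x / sqrt (1 + (y / x)²)) by (field; lra).
  apply Rdiv_lt_0_compat; [apply Rdiv_lt_0_compat; [nra|exact Hx]|exact Hq].
Qed.

Lemma continuous_inv_norm2 (x y : R -> R) t : ex_derive x t -> ex_derive y t ->
  0 < x t ^ 2 + y t ^ 2 -> continuous (fun s => / (x s ^ 2 + y s ^ 2)) t.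
Proof.
  intros Hx Hy HS. apply (ex_derive_continuous (K := R_AbsRing) (V := R_NormedModule)).
  auto_derive. repeat split; auto. apply Rgt_not_eq, HS.
Qed.

Lemma is_derive_RInt_from_0 (f : R -> R) : (forall t, continuous f t) ->
  forall t, is_derive (fun t => RInt f 0 t) t (f t).
Proof.
  intros Hf t. apply (is_derive_RInt f _ 0); [|apply Hf].
  apply filter_forall. intro s.
  apply (RInt_correct (V := R_CompleteNormedModule)), (ex_RInt_continuous (V := R_CompleteNormedModule)).
  intros; apply Hf.
Qed.

Lemma angle_gap_lt_PI (F th : R -> R) :
  (forall t, continuous F t) -> (forall t, continuous th t) -> Rabs (th 0 - F 0) < PI ->
  (forall t, cos (th t) = - cos (F t) -> sin (th t) = - sin (F t) -> False) ->
  forall t, 0 <= t -> Rabs (th t - F t) < PI.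
Proof.
  intros HF Hth H0 Hanti t Ht.
  assert (Hgap : forall t, continuous (fun t => th t - F t) t)
    by (intro s; apply (continuous_minus th F s); [apply Hth|apply HF]).
  apply Rabs_def2 in H0. apply Rabs_def1.
  - apply (continuous_stays_below (fun t => th t - F t)); [exact Hgap|lra| |exact Ht].
    intros s Hs. apply (Hanti s); replace (th s) with (F s + PI) by lra;
      [apply neg_cos|apply neg_sin].
  - enough (- (th t - F t) < PI) by lra.
    apply (continuous_stays_below (fun t => - (th t - F t)));
      [intro s; apply (continuous_opp (V := R_NormedModule)), Hgap|lra| |exact Ht].
    intros s Hs. apply (Hanti s); replace (F s) with (th s + PI) by lra;
      [rewrite neg_cos|rewrite neg_sin]; ring.
Qed.

Section HillPair.

Variables (V u1 u2 : R -> R).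
Hypothesis V_continuous : forall t, continuous V t.
Hypothesis u1_sol : hill_sol V u1.
Hypothesis u2_sol : hill_sol V u2.
Hypothesis wronskian : forall t, u1 t * Derive u2 t - u2 t * Derive u1 t = 1.
Hypothesis u1_0 : 0 < u1 0.
Hypothesis u2_0 : u2 0 = 0.

Let f t := / (u1 t ^ 2 + u2 t ^ 2).

(* The angular speed of [u1 - i u1'], i.e. of the curve [(u1, - u1')]. *)
Let phase_speed t := (u1 t * (V t * u1 t) - (- Derive u1 t) * Derive u1 t)
                     / (u1 t ^ 2 + (- Derive u1 t) ^ 2).

Lemma norm2_pos t : 0 < u1 t ^ 2 + u2 t ^ 2.
Proof. exact (sum_sq_pos_of_cross _ _ _ _ (wronskian t)). Qed.

Lemma phase_norm2_pos t : 0 < u1 t ^ 2 + (- Derive u1 t) ^ 2.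
Proof. apply (sum_sq_pos_of_cross _ _ (Derive u2 t) (- u2 t)). rewrite <- (wronskian t). ring. Qed.

Lemma inv_norm2_continuous t : continuous f t.
Proof.
  apply continuous_inv_norm2; [exists (Derive u1 t)|exists (Derive u2 t)|apply norm2_pos];
    [apply u1_sol|apply u2_sol].
Qed.

Lemma phase_speed_continuous t : continuous phase_speed t.
Proof.
  destruct (u1_sol t) as [Hd Hdd].
  assert (Hratio : forall g : R -> R, ex_derive g t ->
            continuous (fun s => g s / (u1 s ^ 2 + (- Derive u1 s) ^ 2)) t).
  { intros g Hg. apply (ex_derive_continuous (K := R_AbsRing) (V := R_NormedModule)).
    auto_derive. repeat split; try (eexists; eassumption); auto. apply Rgt_not_eq, phase_norm2_pos. }
  assert (Hsplit : forall s, V s * (u1 s ^ 2 / (u1 s ^ 2 + (- Derive u1 s) ^ 2))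
                             + Derive u1 s ^ 2 / (u1 s ^ 2 + (- Derive u1 s) ^ 2) = phase_speed s)
    by (intro s; unfold phase_speed; field; apply Rgt_not_eq, phase_norm2_pos).
  apply (continuous_ext _ _ _ Hsplit), (continuous_plus (V := R_NormedModule)).
  - apply (continuous_mult (K := R_AbsRing)); [apply V_continuous|].
    apply (Hratio (fun s => u1 s ^ 2)). auto_derive. eexists; eassumption.
  - apply (Hratio (fun s => Derive u1 s ^ 2)). auto_derive. eexists; eassumption.
Qed.

Lemma hill_pair_arg t :
  u1 t = sqrt (u1 t ^ 2 + u2 t ^ 2) * cos (RInt f 0 t) /\
  u2 t = sqrt (u1 t ^ 2 + u2 t ^ 2) * sin (RInt f 0 t).
Proof.
  assert (HF0 : RInt f 0 0 = 0) by exact (RInt_point (V := R_CompleteNormedModule) 0 f).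
  apply (polar_lift u1 u2 (Derive u1) (Derive u2) (fun t => RInt f 0 t)
           (fun t => proj1 (u1_sol t)) (fun t => proj1 (u2_sol t)) norm2_pos).
  - intro s. rewrite wronskian. unfold Rdiv. rewrite Rmult_1_l.
    apply (is_derive_RInt_from_0 f inv_norm2_continuous).
  - rewrite HF0, sin_0, cos_0, u2_0. ring.
  - rewrite HF0, sin_0, cos_0, u2_0. lra.
Qed.

Lemma hill_phase : exists th, (forall t, continuous th t) /\ Rabs (th 0) < PI /\
  torus_flow_sol V (fun t => 2 * th t) /\
  forall t, u1 t = sqrt (u1 t ^ 2 + (- Derive u1 t) ^ 2) * cos (th t) /\
            - Derive u1 t = sqrt (u1 t ^ 2 + (- Derive u1 t) ^ 2) * sin (th t).
Proof.
  set (th0 := atan (- Derive u1 0 / u1 0)).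
  set (th := fun t => th0 + RInt phase_speed 0 t).
  assert (Hth : forall t, is_derive th t (phase_speed t)).
  { intro t. rewrite <- (Rplus_0_l (phase_speed t)).
    apply (is_derive_plus (fun _ => th0) (fun t => RInt phase_speed 0 t));
      [auto_derive; auto|apply is_derive_RInt_from_0, phase_speed_continuous]. }
  assert (Hth0 : th 0 = th0)
    by (unfold th; rewrite (RInt_point (V := R_CompleteNormedModule)); apply Rplus_0_r).
  assert (Hdy : forall t, is_derive (fun t => - Derive u1 t) t (V t * u1 t)).
  { intro t. replace (V t * u1 t) with (- - (V t * u1 t)) by ring.
    apply (is_derive_opp (Derive u1)), u1_sol. }
  destruct (atan_angle_init (u1 0) (- Derive u1 0) u1_0) as [Hinit1 Hinit2].
  fold th0 in Hinit1, Hinit2. rewrite <- Hth0 in Hinit1, Hinit2.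
  assert (Hpolar := polar_lift u1 (fun t => - Derive u1 t) (Derive u1) (fun t => V t * u1 t) th
                      (fun t => proj1 (u1_sol t)) Hdy phase_norm2_pos Hth Hinit1 Hinit2).
  exists th. split; [intro t; exact (is_derive_continuous _ _ _ (Hth t))|split; [|split]].
  - rewrite Hth0. assert (Hat := atan_bound (- Derive u1 0 / u1 0)).
    apply Rabs_def1; fold th0 in Hat; lra.
  - exact (torus_flow_sol_of_hill V u1 th u1_sol phase_norm2_pos Hpolar Hth).
  - exact Hpolar.
Qed.

(* [(u1, u2)] and [(u1, - u1')] are never antiparallel: that would force [u1 = 0] and
   make the Wronskian [- u2 u1'] nonpositive. *)
Lemma hill_pair_torus_sol : exists chi, torus_flow_sol V chi /\
  forall t, 0 <= t -> Rabs (chi t - 2 * RInt f 0 t) <= 2 * PI.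
Proof.
  destruct hill_phase as (th & Hth & Hth0 & Hchi & Hphase).
  exists (fun t => 2 * th t). split; [exact Hchi|].
  assert (Hgap : forall t, 0 <= t -> Rabs (th t - RInt f 0 t) < PI).
  { apply angle_gap_lt_PI; [|exact Hth| |].
    - intro t. exact (is_derive_continuous _ _ _ (is_derive_RInt_from_0 f inv_norm2_continuous t)).
    - rewrite (RInt_point (V := R_CompleteNormedModule)), Rminus_0_r. exact Hth0.
    - intros t Hc Hs. destruct (hill_pair_arg t) as [L1 L2]; destruct (Hphase t) as [P1 P2].
      rewrite Hc in P1. rewrite Hs in P2.
      set (w := sqrt (u1 t ^ 2 + u2 t ^ 2)) in *.
      set (r := sqrt (u1 t ^ 2 + (- Derive u1 t) ^ 2)) in *.
      assert (Hw : 0 < w) by (apply sqrt_lt_R0, norm2_pos).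
      assert (Hr : 0 < r) by (apply sqrt_lt_R0, phase_norm2_pos).
      assert (Hcos : cos (RInt f 0 t) = 0) by nra.
      assert (W := wronskian t). rewrite L1, L2, Hcos in W.
      replace (Derive u1 t) with (r * sin (RInt f 0 t)) in W by lra.
      assert (0 <= w * r * sin (RInt f 0 t) ^ 2)
        by (apply Rmult_le_pos; [apply Rmult_le_pos; lra|apply pow2_ge_0]).
      nra. }
  intros t Ht. specialize (Hgap t Ht).
  replace (2 * th t - 2 * RInt f 0 t) with (2 * (th t - RInt f 0 t)) by ring.
  rewrite Rabs_mult, (Rabs_right 2) by lra. lra.
Qed.

Lemma hill_pair_rotation T : 0 < T -> (forall t, f (t + T) = f t) ->
  forall phi, torus_flow_sol V phi ->
  is_lim (fun t => (phi t - phi 0) / t) p_infty (2 * RInt f 0 T / T).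
Proof.
  intros HT Hper phi Hphi.
  destruct hill_pair_torus_sol as [chi [Hchi Hnear]].
  destruct (torus_flow_sol_close V phi chi V_continuous Hphi Hchi) as [B HB].
  assert (Hmean := RInt_periodic_linear_bound f T HT inv_norm2_continuous
                     (fun t => Rlt_le _ _ (Rinv_0_lt_compat _ (norm2_pos t))) Hper).
  assert (HF0 : RInt f 0 0 = 0) by exact (RInt_point (V := R_CompleteNormedModule) 0 f).
  apply (is_lim_div_of_bounded _ _ (2 * B + 4 * PI + 2 * RInt f 0 T)).
  intros t Ht.
  assert (HB0 := HB 0 (Rle_refl 0)). specialize (HB t Ht).
  assert (Hnear0 := Hnear 0 (Rle_refl 0)). specialize (Hnear t Ht).
  specialize (Hmean t Ht). rewrite HF0 in Hnear0.
  apply Rabs_le_between in HB, HB0, Hnear, Hnear0, Hmean.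
  apply Rabs_le_between. lra.
Qed.

End HillPair.

Lemma is_lim_mean_periodic (f : R -> R) T : 0 < T -> (forall t, continuous f t) ->
  (forall t, 0 <= f t) -> (forall t, f (t + T) = f t) ->
  is_lim (fun t => 2 / t * RInt f 0 t) p_infty (2 * RInt f 0 T / T).
Proof.
  intros HT Hf Hpos Hper.
  apply (is_lim_ext (fun t => 2 * RInt f 0 t / t)); [intro t; unfold Rdiv; ring|].
  apply (is_lim_div_of_bounded _ _ (2 * RInt f 0 T)).
  intros t Ht. assert (Hb := RInt_periodic_linear_bound f T HT Hf Hpos Hper t Ht).
  replace (2 * RInt f 0 t - 2 * RInt f 0 T / T * t)
    with (2 * (RInt f 0 t - RInt f 0 T / T * t)) by (field; lra).
  rewrite Rabs_mult, (Rabs_right 2) by lra. lra.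
Qed.

Theorem mainTheorem5 (V : R -> R) (T : R) :
  0 < T ->
  (forall t, continuous V t) ->
  (forall t, V (t + T) = V t) ->
  monodromy_elliptic V T ->
  exists u1 u2 : R -> R,
    hill_sol V u1 /\ hill_sol V u2 /\
    (forall t, u1 t * Derive u2 t - u2 t * Derive u1 t = 1) /\
    let w := fun t => sqrt (u1 t ^ 2 + u2 t ^ 2) in
    let thetaH := RInt (fun t => / (w t ^ 2)) 0 T in
    (forall t, 0 < w t) /\
    (forall t, w (t + T) = w t) /\
    ermakov_pinney_sol V w /\
    is_lim (fun t => 2 / t * RInt (fun s => / (u1 s ^ 2 + u2 s ^ 2)) 0 t)
           p_infty (2 * thetaH / T) /\
    (forall phi : R -> R, torus_flow_sol V phi ->
       is_lim (fun t => (phi t - phi 0) / t) p_infty (2 * thetaH / T)) /\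
    (T = 2 * PI ->
       2 * thetaH / T = RInt (fun t => / (u1 t ^ 2 + u2 t ^ 2)) 0 (2 * PI) / PI).
Proof.
  intros HT HV HP Hell.
  destruct (hill_elliptic_pair V T HV HP Hell) as (u1 & u2 & Hu1 & Hu2 & W & Hu10 & Hu20 & Hper).
  exists u1, u2. split; [exact Hu1|split; [exact Hu2|split; [exact W|]]].
  intros w thetaH.
  assert (HS := norm2_pos u1 u2 W).
  assert (Htheta : thetaH = RInt (fun t => / (u1 t ^ 2 + u2 t ^ 2)) 0 T).
  { apply RInt_ext. intros t _. unfold w. rewrite pow2_sqrt; [reflexivity|apply Rlt_le, HS]. }
  assert (Hfper : forall t, / (u1 (t + T) ^ 2 + u2 (t + T) ^ 2) = / (u1 t ^ 2 + u2 t ^ 2))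
    by (intro t; rewrite Hper; reflexivity).
  rewrite Htheta.
  split; [intro t; apply sqrt_lt_R0, HS|].
  split; [intro t; unfold w; rewrite Hper; reflexivity|].
  split; [exact (ermakov_pinney_of_pair V u1 u2 Hu1 Hu2 W)|].
  split.
  { apply is_lim_mean_periodic; [exact HT|exact (inv_norm2_continuous V u1 u2 Hu1 Hu2 W)| |exact Hfper].
    intro t. apply Rlt_le, Rinv_0_lt_compat, HS. }
  split; [exact (hill_pair_rotation V u1 u2 HV Hu1 Hu2 W Hu10 Hu20 T HT Hfper)|].
  intro H2PI. subst T. field. apply PI_neq0.
Qed.
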